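(* Let $f_0:\mathbb{T}\times\mathbb{R}\to\mathbb{T}\times\mathbb{R}$ be the map $(\psi,w)\mapsto(\psi_1,w_1)$ with $\psi_1=\psi+w$, $w_1=w+2\pi(\cos\psi_1-1)$ (i.e. $f_\mu$ with $\mu=0$). Then the fixed point $(0,0)$ is locally unstable under $f_0$.
   Context: $\mathbb{T}=\mathbb{R}/2\pi\mathbb{Z}$. A fixed point $p_{\rm s}$ is locally stable if for every $\epsilon>0$ there exists $\delta>0$ such that $\|p-p_{\rm s}\|<\delta$ implies $\|f^n(p)-p_{\rm s}\|<\epsilon$ for all $n\in\mathbb{Z}$; otherwise it is locally unstable. *)

From Stdlib Require Import Reals Lra ZArith.
Open Scope R_scope.

(* Points of T x R are represented by lifts (psi, w) in R x R; all notions
   below are 2*PI-periodic in psi, so they descend to T x R. *)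

Definition f0 (p : R * R) : R * R :=
  let psi1 := fst p + snd p in
  (psi1, snd p + 2 * PI * (cos psi1 - 1)).

Definition f0_inv (q : R * R) : R * R :=
  let w := snd q - 2 * PI * (cos (fst q) - 1) in
  (fst q - w, w).

Definition f0_iter (n : Z) (p : R * R) : R * R :=
  match n with
  | Z0 => p
  | Zpos k => Pos.iter f0 p k
  | Zneg k => Pos.iter f0_inv p k
  end.

(* Distance from x (mod 2 PI) to 0 on T = R / 2 PI Z:
   |x - 2 PI k| where x - 2 PI k is the representative in [-PI, PI). *)
Definition tnorm (x : R) : R :=
  Rabs (x - 2 * PI * IZR (Int_part ((x + PI) / (2 * PI)))).

Definition dist0 (p : R * R) : R :=
  sqrt (tnorm (fst p) ^ 2 + snd p ^ 2).

Definition locally_stable_origin (f_iter : Z -> R * R -> R * R) : Prop :=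
  forall eps, eps > 0 -> exists delta, delta > 0 /\
    forall p, dist0 p < delta -> forall n : Z, dist0 (f_iter n p) < eps.

(* Along the orbit of (0, -a) the velocity w never increases, so the angle
   drifts to -oo at speed at least a.  Stability would keep |w| < 1 forever;
   but the first time the angle crosses -2 it lands in (-3, -2], where
   cos <= 0, and the kick 2 PI (cos - 1) <= -2 PI pushes w below -1. *)

From Stdlib Require Import Reals ZArith Lra.
Open Scope R_scope.

Lemma f0_origin : f0 (0, 0) = (0, 0).
Proof.
  unfold f0; simpl. rewrite Rplus_0_r, cos_0. f_equal; ring.
Qed.

Lemma f0_iter_of_nat (n : nat) (p : R * R) :
  f0_iter (Z.of_nat n) p = Nat.iter n f0 p.
Proof.
  destruct n as [|m]; [reflexivity|].
  simpl. induction m as [|m IH]; [reflexivity|].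
  simpl Pos.of_succ_nat. rewrite Pos.iter_succ, IH. reflexivity.
Qed.

Lemma fst_f0 (p : R * R) : fst (f0 p) = fst p + snd p.
Proof. reflexivity. Qed.

Lemma tnorm_0 : tnorm 0 = 0.
Proof.
  unfold tnorm. pose proof PI_RGT_0.
  replace ((0 + PI) / (2 * PI)) with (/ 2) by (field; lra).
  unfold Int_part. rewrite <- (tech_up (/ 2) 1); simpl; try lra.
  rewrite Rmult_0_r, Rminus_0_r. apply Rabs_R0.
Qed.

Lemma dist0_on_axis (w : R) : dist0 (0, w) = Rabs w.
Proof.
  unfold dist0; simpl. rewrite tnorm_0, <- sqrt_Rsqr_abs.
  f_equal. unfold Rsqr. ring.
Qed.

Lemma Rabs_snd_le_dist0 (p : R * R) : Rabs (snd p) <= dist0 p.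
Proof.
  unfold dist0. rewrite <- sqrt_Rsqr_abs. apply sqrt_le_1_alt.
  unfold Rsqr. nra.
Qed.

Lemma cos_nonpos_between (x : R) : -3 < x -> x <= -2 -> cos x <= 0.
Proof.
  intros. rewrite <- cos_neg. pose proof PI_4. pose proof PI2_3_2. apply cos_le_0; lra.
Qed.

Lemma f0_snd_le (p : R * R) : snd (f0 p) <= snd p.
Proof.
  unfold f0; simpl. pose proof (COS_bound (fst p + snd p)). pose proof PI_RGT_0.
  nra.
Qed.

Lemma f0_barrier (p : R * R) :
  -2 < fst p -> Rabs (snd p) < 1 -> Rabs (snd (f0 p)) < 1 -> -2 < fst (f0 p).
Proof.
  unfold f0; simpl. intros Hpsi Hw Hw1.
  apply Rabs_def2 in Hw as [Hw Hw']. apply Rabs_def2 in Hw1 as [_ Hw1].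
  destruct (Rle_lt_dec (fst p + snd p) (-2)) as [Hle|]; [|lra].
  pose proof (cos_nonpos_between (fst p + snd p) ltac:(lra) Hle).
  pose proof PI2_3_2. nra.
Qed.

Section ForwardOrbit.

Variable p : R * R.

Local Notation orbit n := (Nat.iter n f0 p).

Lemma orbit_snd_le (n : nat) : snd (orbit n) <= snd p.
Proof.
  induction n as [|n IH]; [simpl; lra|rewrite Nat.iter_succ].
  pose proof (f0_snd_le (orbit n)). lra.
Qed.

Lemma orbit_fst_drift (n : nat) : fst (orbit n) <= fst p + INR n * snd p.
Proof.
  induction n as [|n IH]; [simpl; lra|rewrite Nat.iter_succ, S_INR, fst_f0].
  pose proof (orbit_snd_le n). lra.
Qed.

Lemma orbit_trapped :
  -2 < fst p -> (forall n, Rabs (snd (orbit n)) < 1) ->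
  forall n, -2 < fst (orbit n).
Proof.
  intros H0 Hw n. induction n as [|n IH]; [exact H0|].
  apply f0_barrier; [exact IH|apply Hw|apply (Hw (S n))].
Qed.

End ForwardOrbit.

Theorem mainTheorem2 :
  f0 (0, 0) = (0, 0) /\ ~ locally_stable_origin f0_iter.
Proof.
  split; [exact f0_origin|].
  intros Hstable. destruct (Hstable 1 ltac:(lra)) as [delta [Hdelta Hclose]].
  set (a := delta / 2). set (p := (0, - a)).
  assert (Hp : dist0 p < delta).
  { unfold p. rewrite dist0_on_axis, Rabs_Ropp, Rabs_pos_eq; unfold a; lra. }
  assert (Hbounded : forall n, Rabs (snd (Nat.iter n f0 p)) < 1).
  { intro n. rewrite <- f0_iter_of_nat.
    pose proof (Rabs_snd_le_dist0 (f0_iter (Z.of_nat n) p)).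
    pose proof (Hclose p Hp (Z.of_nat n)). lra. }
  destruct (INR_archimed a 2 ltac:(unfold a; lra)) as [n Hn].
  pose proof (orbit_trapped p ltac:(simpl; lra) Hbounded n).
  pose proof (orbit_fst_drift p n). simpl in *. lra.
Qed.
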